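(* Let $\bm X$ be an $n\times p$ matrix of full column rank and $\bm Z$ an $n\times q$ matrix, $q=q_1+\dots+q_r$. There exists a finite constant $\hat\varphi$, depending only on $\bm W=(\bm X,\bm Z)$ (and the block sizes $q_j$), such that for every $\bm\tau\in(0,\infty)^r$ and every $\bm l=(l_1,\dots,l_n)^T\in\mathbb{R}^n$, $$\big\|S(\bm\tau)^{-1}\bm Z^T(\bm I-P_X)\bm l\big\|\le\hat\varphi\sum_{i=1}^n|l_i|,$$ where $\|\cdot\|$ is the Euclidean norm.
   Context: $P_X=\bm X(\bm X^T\bm X)^{-1}\bm X^T$; $\bm D(\bm\tau)=\oplus_{j=1}^r\tau_j\bm I_{q_j}$; $S(\bm\tau)=\bm Z^T(\bm I-P_X)\bm Z+\bm D(\bm\tau)$. *)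

From HB Require Import structures.
From mathcomp Require Import all_boot all_order all_algebra.
Set Implicit Arguments. Unset Strict Implicit. Unset Printing Implicit Defensive.
Import Order.TTheory GRing.Theory Num.Theory.
Local Open Scope ring_scope.

Definition projX (R : rcfType) (n p : nat) (X : 'M[R]_(n, p)) : 'M[R]_n :=
  X *m invmx (X^T *m X) *m X^T.

Definition Dtau (R : rcfType) (r : nat) (qs : 'I_r -> nat) (tau : 'I_r -> R)
  : 'M[R]_(\sum_(j < r) qs j) :=
  \mxdiag_(j < r) ((tau j)%:M : 'M[R]_(qs j)).

Definition Stau (R : rcfType) (n p r : nat) (qs : 'I_r -> nat)
  (X : 'M[R]_(n, p)) (Z : 'M[R]_(n, \sum_(j < r) qs j)) (tau : 'I_r -> R)
  : 'M[R]_(\sum_(j < r) qs j) :=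
  Z^T *m (1%:M - projX X) *m Z + Dtau qs tau.

Definition enorm (R : rcfType) (m : nat) (v : 'cV[R]_m) : R :=
  Num.sqrt (\sum_(i < m) (v i 0) ^+ 2).

From mathcomp Require Import all_boot all_order all_algebra.
From mathcomp Require Import ring lra.
Set Implicit Arguments. Unset Strict Implicit. Unset Printing Implicit Defensive.
Import Order.TTheory GRing.Theory Num.Theory.
Local Open Scope ring_scope.

(* The vector S(tau)^-1 Z^T (I - P_X) l minimises the ridge objective
   |A u - l|^2 + sum_i d_i u_i^2, where A = (I - P_X) Z and the weights d_i > 0 are read off
   tau.  The coordinates of a ridge minimiser are bounded by C |l|_1 with C independent of the
   weights, by induction on the support S of the problem: for a coordinate j of largest weight
   on S, comparing the minimiser y with a least-squares preimage of A y supported on S bounds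
   y_j, and the remaining coordinates minimise the ridge problem on S \ {j} with the data
   l - y_j A e_j, whose l1 norm is again O(|l|_1). *)

Section VectorNorms.
Variable R : rcfType.

Lemma normr_le_sqr (a b : R) : 0 <= b -> a ^+ 2 <= b ^+ 2 -> `|a| <= b.
Proof.
move=> b0 ab; rewrite -sqrtr_sqr -(ger0_norm b0) -[`|b|]sqrtr_sqr.
exact: ler_wsqrtr.
Qed.

Lemma ler_sum_term (I : finType) (F : I -> R) i :
  (forall j, 0 <= F j) -> F i <= \sum_j F j.
Proof. by move=> F0; rewrite (bigD1 i) //= lerDl sumr_ge0. Qed.

Definition sqnorm m (v : 'cV[R]_m) := \sum_k v k 0 ^+ 2.
Definition norm1 m (v : 'cV[R]_m) := \sum_k `|v k 0|.
Definition mxnorm1 m n (M : 'M[R]_(m, n)) := \sum_i \sum_k `|M i k|.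
Definition vdot m (u v : 'cV[R]_m) := (u^T *m v) 0 0.

Lemma sqnorm_ge0 m (v : 'cV[R]_m) : 0 <= sqnorm v.
Proof. by apply: sumr_ge0 => k _; apply: sqr_ge0. Qed.

Lemma norm1_ge0 m (v : 'cV[R]_m) : 0 <= norm1 v.
Proof. by apply: sumr_ge0. Qed.

Lemma mxnorm1_ge0 m n (M : 'M[R]_(m, n)) : 0 <= mxnorm1 M.
Proof. by apply: sumr_ge0 => i _; apply: sumr_ge0. Qed.

Lemma sqnormN m (v : 'cV[R]_m) : sqnorm (- v) = sqnorm v.
Proof. by apply: eq_bigr => k _; rewrite mxE sqrrN. Qed.

Lemma sqnorm_coord m (v : 'cV[R]_m) k : v k 0 ^+ 2 <= sqnorm v.
Proof.
by rewrite /sqnorm; apply: (@ler_sum_term _ (fun k => v k 0 ^+ 2)) => j; apply: sqr_ge0.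
Qed.

Lemma norm1_coord m (v : 'cV[R]_m) k : `|v k 0| <= norm1 v.
Proof. by rewrite /norm1; apply: (@ler_sum_term _ (fun k => `|v k 0|)). Qed.

Lemma sqnorm_le_norm1 m (v : 'cV[R]_m) : sqnorm v <= norm1 v ^+ 2.
Proof.
rewrite /sqnorm expr2 {1}/norm1 mulr_suml; apply: ler_sum => k _.
by rewrite -real_normK ?num_real // expr2 ler_wpM2l ?norm1_coord.
Qed.

Lemma normr_le_norm1 m (v : 'cV[R]_m) (a : R) :
  a ^+ 2 <= sqnorm v -> `|a| <= norm1 v.
Proof. by move=> av; apply: normr_le_sqr (norm1_ge0 v) (le_trans av (sqnorm_le_norm1 v)). Qed.

Lemma norm1B m (u v : 'cV[R]_m) : norm1 (u - v) <= norm1 u + norm1 v.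
Proof. by rewrite -big_split; apply: ler_sum => k _; rewrite !mxE ler_normB. Qed.

Lemma norm1_scale_delta m (c : R) (j : 'I_m) : norm1 (c *: delta_mx j 0) = `|c|.
Proof.
rewrite /norm1 (bigD1 j) //= big1 => [|i ij]; first by rewrite !mxE !eqxx mulr1 addr0.
by rewrite !mxE (negPf ij) mulr0 normr0.
Qed.

Lemma norm1_mulmx m n (M : 'M[R]_(m, n)) v : norm1 (M *m v) <= mxnorm1 M * norm1 v.
Proof.
rewrite /norm1 /mxnorm1 mulr_suml; apply: ler_sum => i _.
rewrite mxE mulr_suml; apply: le_trans (ler_norm_sum _ _ _) _.
by apply: ler_sum => k _; rewrite normrM ler_wpM2l ?norm1_coord.
Qed.

Lemma norm1_le m (v : 'cV[R]_m) (c : R) :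
  (forall k, `|v k 0| <= c) -> norm1 v <= m%:R * c.
Proof.
move=> vc; apply: le_trans (_ : _ <= \sum_(k < m) c) _; first exact: ler_sum.
by rewrite sumr_const card_ord mulr_natl.
Qed.

Lemma enorm_le_norm1 m (v : 'cV[R]_m) : enorm v <= norm1 v.
Proof.
rewrite -(ger0_norm (norm1_ge0 v)) -sqrtr_sqr.
exact: ler_wsqrtr (sqnorm_le_norm1 v).
Qed.

Lemma vdotC m (u v : 'cV[R]_m) : vdot u v = vdot v u.
Proof. by rewrite /vdot -[u^T *m v]trmxK trmx_mul trmxK mxE. Qed.

Lemma vdotDl m (u v w : 'cV[R]_m) : vdot (u + v) w = vdot u w + vdot v w.
Proof. by rewrite /vdot linearD /= mulmxDl mxE. Qed.

Lemma vdotDr m (u v w : 'cV[R]_m) : vdot u (v + w) = vdot u v + vdot u w.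
Proof. by rewrite /vdot mulmxDr mxE. Qed.

Lemma vdot0l m (v : 'cV[R]_m) : vdot 0 v = 0.
Proof. by rewrite /vdot trmx0 mul0mx mxE. Qed.

Lemma vdot_mulmx m n (M : 'M[R]_(m, n)) u v : vdot u (M *m v) = vdot (M^T *m u) v.
Proof. by rewrite /vdot trmx_mul trmxK mulmxA. Qed.

Lemma sqnormE m (v : 'cV[R]_m) : sqnorm v = vdot v v.
Proof. by rewrite /vdot mxE; apply: eq_bigr => k _; rewrite mxE expr2. Qed.

Lemma sqnormD m (u v : 'cV[R]_m) : sqnorm (u + v) = sqnorm u + 2 * vdot u v + sqnorm v.
Proof. by rewrite !sqnormE vdotDl !vdotDr (vdotC v u) mulr2n mulrDl mul1r !addrA. Qed.

Lemma sqnorm_eq0 m (v : 'cV[R]_m) : sqnorm v = 0 -> v = 0.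
Proof.
move=> v0; apply/matrixP => k j; rewrite ord1 mxE; apply/eqP; rewrite -sqrf_eq0.
by apply/eqP; apply: (psumr_eq0P (fun k _ => sqr_ge0 (v k 0)) v0).
Qed.

Lemma unitmx_quad_inj m (M : 'M[R]_m) :
  (forall u : 'cV[R]_m, vdot u (M *m u) = 0 -> u = 0) -> M \in unitmx.
Proof.
move=> Minj; rewrite -unitmx_tr -row_free_unit; apply: inj_row_free => v vM.
have Mv : M *m v^T = 0 by apply: trmx_inj; rewrite trmx_mul trmxK vM trmx0.
by apply: trmx_inj; rewrite trmx0; apply: Minj; rewrite Mv /vdot mulmx0 mxE.
Qed.

Lemma vdot_gram n m (A : 'M[R]_(n, m)) u : vdot u (A^T *m A *m u) = sqnorm (A *m u).
Proof. by rewrite -mulmxA vdot_mulmx trmxK sqnormE. Qed.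

End VectorNorms.

Section Ridge.
Variables (R : rcfType) (n q : nat) (A : 'M[R]_(n, q)).
Implicit Types (d : 'I_q -> R) (l : 'cV[R]_n) (u y z h : 'cV[R]_q) (S : {set 'I_q}).

Definition penalty d u := \sum_i d i * u i 0 ^+ 2.
Definition ridge_obj d l u := sqnorm (A *m u - l) + penalty d u.
Definition supported S u := forall i, i \notin S -> u i 0 = 0.
Definition ridge_min S d l y :=
  supported S y /\ forall u, supported S u -> ridge_obj d l y <= ridge_obj d l u.

Lemma supported0 S : supported S 0.
Proof. by move=> i _; rewrite mxE. Qed.

Lemma supportedT u : supported [set: 'I_q] u.
Proof. by move=> i; rewrite inE. Qed.

Lemma penalty0 d : penalty d 0 = 0.
Proof. by rewrite /penalty big1 // => i _; rewrite mxE expr0n mulr0. Qed.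

Lemma penaltyE d u : penalty d u = vdot u (diag_mx (\row_i d i) *m u).
Proof.
rewrite /vdot mul_diag_mx mxE; apply: eq_bigr => i _.
by rewrite !mxE [in LHS]expr2 mulrCA.
Qed.

Lemma penalty_ge0 d u : (forall i, 0 <= d i) -> 0 <= penalty d u.
Proof. by move=> d0; apply: sumr_ge0 => i _; rewrite mulr_ge0 ?sqr_ge0. Qed.

Lemma penalty_coord d u j : (forall i, 0 <= d i) -> d j * u j 0 ^+ 2 <= penalty d u.
Proof.
move=> d0; rewrite /penalty.
by apply: (@ler_sum_term _ _ (fun i => d i * u i 0 ^+ 2)) => i; rewrite mulr_ge0 ?sqr_ge0.
Qed.

Lemma penalty_eq0 d u : (forall i, 0 < d i) -> penalty d u = 0 -> u = 0.
Proof.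
move=> d0 u0; apply/matrixP => i k; rewrite ord1 mxE; apply/eqP.
have d0' j : 0 <= d j by apply: ltW.
have := penalty_coord u i d0'; rewrite u0 => iu.
by rewrite -sqrf_eq0 -(mulrI_eq0 _ (lregP (lt0r_neq0 (d0 i)))) eq_le iu mulr_ge0 ?sqr_ge0.
Qed.

Lemma penalty_le_sqnorm S d u (b : R) : supported S u ->
  (forall i, i \in S -> d i <= b) -> penalty d u <= b * sqnorm u.
Proof.
move=> uS db; rewrite /penalty /sqnorm mulr_sumr; apply: ler_sum => i _.
have [iS|iS] := boolP (i \in S); first by rewrite ler_wpM2r ?sqr_ge0 ?db.
by rewrite uS // expr0n !mulr0.
Qed.

Lemma penaltyD_delta d u j (c : R) : u j 0 = 0 ->
  penalty d (u + c *: delta_mx j 0) = penalty d u + d j * c ^+ 2.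
Proof.
move=> uj; rewrite /penalty (bigD1 j) // [in RHS](bigD1 j) //= !mxE uj !eqxx.
rewrite mulr1 add0r expr0n mulr0 add0r addrC; congr (_ + _).
by apply: eq_bigr => i ij; rewrite !mxE (negPf ij) mulr0 addr0.
Qed.

Lemma ridge_obj_normal d l y h :
  (A^T *m A + diag_mx (\row_i d i)) *m y = A^T *m l ->
  ridge_obj d l (y + h) = ridge_obj d l y + sqnorm (A *m h) + penalty d h.
Proof.
set D := diag_mx _ => normal; set r := A *m y - l.
have cross : vdot r (A *m h) + vdot (D *m y) h = 0.
  by rewrite vdot_mulmx -vdotDl /r mulmxBr mulmxA addrAC -mulmxDl normal subrr vdot0l.
rewrite /ridge_obj -/r.
have -> : A *m (y + h) - l = r + A *m h by rewrite mulmxDr addrAC.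
rewrite sqnormD !penaltyE -/D mulmxDr vdotDl !vdotDr.
rewrite (vdot_mulmx D y h) tr_diag_mx -/D (vdotC h (D *m y)).
by move: cross; lra.
Qed.

Lemma ridge_obj_shift d l z j (c : R) : z j 0 = 0 ->
  ridge_obj d l (z + c *: delta_mx j 0)
  = ridge_obj d (l - A *m (c *: delta_mx j 0)) z + d j * c ^+ 2.
Proof.
move=> zj; rewrite /ridge_obj penaltyD_delta // addrA; congr (sqnorm _ + _ + _).
by rewrite mulmxDr opprB addrA addrAC.
Qed.

Lemma ridge_min_fit S d l y : (forall i, 0 <= d i) -> ridge_min S d l y ->
  norm1 (A *m y) <= n%:R * (2 * norm1 l).
Proof.
move=> d0 [_ ymin].
have res : sqnorm (A *m y - l) <= sqnorm l.
  have := ymin 0 (@supported0 S).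
  rewrite /ridge_obj mulmx0 sub0r sqnormN penalty0 addr0.
  by have := penalty_ge0 y d0; lra.
apply: norm1_le => k.
have -> : (A *m y) k 0 = (A *m y - l) k 0 + l k 0 by rewrite !mxE subrK.
have := normr_le_norm1 (le_trans (sqnorm_coord _ k) res).
have := norm1_coord l k; have := ler_normD ((A *m y - l) k 0) (l k 0); lra.
Qed.

Definition mask S : 'M[R]_q := diag_mx (\row_i (i \in S)%:R).

(* On the image under [A] of the vectors supported on [S], a right inverse of [A] whose values
   are supported on [S]. *)
Definition restricted_pinv S := mask S *m pinvmx (A *m mask S).

Lemma mask_supported S y : supported S y -> mask S *m y = y.
Proof.
move=> yS; apply/matrixP => i k; rewrite mul_diag_mx !mxE ord1.
by have [iS|iS] := boolP (i \in S); rewrite ?mul1r // mul0r yS.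
Qed.

Lemma supported_restricted_pinv S v : supported S (restricted_pinv S *m v).
Proof. by move=> i iS; rewrite -mulmxA mul_diag_mx !mxE (negPf iS) mul0r. Qed.

Lemma restricted_pinvK S y : supported S y ->
  A *m (restricted_pinv S *m (A *m y)) = A *m y.
Proof.
move=> yS; rewrite -{1}(mask_supported yS) /restricted_pinv.
rewrite [A *m (mask S *m y)]mulmxA !(mulmxA A) mulmxA mulmxKpV //.
by rewrite -mulmxA mask_supported.
Qed.

Definition fit_bound := 2 * n%:R * \sum_(T : {set 'I_q}) mxnorm1 (restricted_pinv T).

Lemma fit_bound_ge0 : 0 <= fit_bound.
Proof. by rewrite mulr_ge0 ?mulr_ge0 ?sumr_ge0 // => T _; apply: mxnorm1_ge0. Qed.

(* Comparing [y] with the least-squares fit of [A *m y] supported on [S]: as [d j] is the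
   largest weight on [S], the coordinate [y j 0] is controlled by the data alone. *)
Lemma ridge_min_max_weight S d l y j : (forall i, 0 < d i) -> ridge_min S d l y ->
  (forall i, i \in S -> d i <= d j) -> `|y j 0| <= fit_bound * norm1 l.
Proof.
move=> d0 ymin jmax; have d0' i : 0 <= d i by apply: ltW.
set y0 := restricted_pinv S *m (A *m y); have y0S := @supported_restricted_pinv S (A *m y).
have pen_le : penalty d y <= penalty d y0.
  have := ymin.2 y0 y0S; rewrite /ridge_obj restricted_pinvK ?lerD2l //.
  exact: ymin.1.
have yj : y j 0 ^+ 2 <= sqnorm y0.
  rewrite -(ler_pM2l (d0 j)); apply: le_trans (penalty_coord _ _ d0') _.
  exact: le_trans pen_le (penalty_le_sqnorm y0S jmax).
apply: le_trans (normr_le_norm1 yj) _; apply: le_trans (norm1_mulmx _ _) _.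
apply: le_trans (ler_wpM2l (mxnorm1_ge0 _) (ridge_min_fit d0' ymin)) _.
have -> : fit_bound * norm1 l
    = (\sum_(T : {set 'I_q}) mxnorm1 (restricted_pinv T)) * (n%:R * (2 * norm1 l)).
  by rewrite /fit_bound; ring.
apply: ler_wpM2r; first by rewrite mulr_ge0 ?mulr_ge0 ?norm1_ge0.
by apply: (@ler_sum_term _ _ (fun T => mxnorm1 (restricted_pinv T))) => T; apply: mxnorm1_ge0.
Qed.

Lemma ridge_min_drop S d l y j : j \in S -> ridge_min S d l y ->
  ridge_min (S :\ j) d (l - A *m (y j 0 *: delta_mx j 0)) (y - y j 0 *: delta_mx j 0).
Proof.
set c := y j 0; set e := delta_mx j 0 => jS [yS ymin].
have notin_neq i : i \notin S -> i != j by apply: contraNneq => ->.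
have y'j : (y - c *: e) j 0 = 0 by rewrite !mxE !eqxx mulr1 subrr.
split=> [i|u uS].
  rewrite in_setD1 negb_and negbK => /orP[/eqP->//|iS].
  by rewrite !mxE yS // (negPf (notin_neq i iS)) mulr0 subr0.
have uj : u j 0 = 0 by apply: uS; rewrite !inE eqxx.
have ceS : supported S (u + c *: e).
  move=> i iS; rewrite !mxE (negPf (notin_neq i iS)) mulr0 addr0.
  by apply: uS; rewrite in_setD1 (negPf iS) andbF.
have := ymin _ ceS; rewrite -{1}(subrK (c *: e) y) !ridge_obj_shift //.
by rewrite lerD2r.
Qed.

Definition ridge_coord_bound S (C : R) := forall d l y, (forall i, 0 < d i) ->
  ridge_min S d l y -> forall i, `|y i 0| <= C * norm1 l.

Lemma ridge_coord_bound_set0 (C : R) : 0 <= C -> ridge_coord_bound set0 C.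
Proof.
move=> C0 d l y _ [y0 _] i.
by rewrite y0 ?inE // normr0 mulr_ge0 ?norm1_ge0.
Qed.

Definition ridge_step_const (C : R) := fit_bound + C * (1 + fit_bound * mxnorm1 A).

Lemma ridge_step_const_ge0 (C : R) : 0 <= C -> 0 <= ridge_step_const C.
Proof.
move=> C0; apply: addr_ge0 fit_bound_ge0 (mulr_ge0 C0 (addr_ge0 ler01 _)).
exact: mulr_ge0 fit_bound_ge0 (mxnorm1_ge0 A).
Qed.

Lemma ridge_coord_bound_step S (C : R) : 0 <= C ->
  (forall j, j \in S -> ridge_coord_bound (S :\ j) C) ->
  ridge_coord_bound S (ridge_step_const C).
Proof.
move=> C0 IH; have [->|[j0 j0S]] := set_0Vmem S.
  exact/ridge_coord_bound_set0/ridge_step_const_ge0.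
move=> d l y d0 ymin i.
case: (arg_maxP d j0S) => j jS jmax.
have yj := ridge_min_max_weight d0 ymin jmax.
pose l' := l - A *m (y j 0 *: delta_mx j 0).
have l'_le : norm1 l' <= (1 + fit_bound * mxnorm1 A) * norm1 l.
  apply: le_trans (norm1B _ _) _.
  rewrite mulrDl mul1r lerD2l mulrAC; apply: le_trans (norm1_mulmx _ _) _.
  by rewrite norm1_scale_delta mulrC ler_wpM2r ?mxnorm1_ge0.
have N0 := norm1_ge0 l.
have -> : ridge_step_const C * norm1 l
    = fit_bound * norm1 l + C * ((1 + fit_bound * mxnorm1 A) * norm1 l).
  by rewrite /ridge_step_const; ring.
have [->|ij] := eqVneq i j.
  by apply: le_trans yj _; rewrite lerDl mulr_ge0 ?(le_trans (norm1_ge0 l') l'_le).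
have -> : y i 0 = (y - y j 0 *: delta_mx j 0) i 0 by rewrite !mxE (negPf ij) mulr0 subr0.
apply: le_trans (IH j jS d l' _ d0 (ridge_min_drop jS ymin) i) _.
by rewrite ler_wpDl ?(mulr_ge0 fit_bound_ge0 N0) ?ler_wpM2l.
Qed.

Lemma ridge_coord_bound_card m :
  exists2 C, 0 <= C & forall S, (#|S| <= m)%N -> ridge_coord_bound S C.
Proof.
elim: m => [|m [C C0 IH]].
  by exists 0 => // S; rewrite leqn0 => /eqP/cards0_eq->; apply: ridge_coord_bound_set0.
exists (ridge_step_const C); first exact: ridge_step_const_ge0.
move=> S Sm; apply: ridge_coord_bound_step => // j jS; apply: IH.
by move: Sm; rewrite (cardsD1 j S) jS.
Qed.

End Ridge.

Section RidgeSolution.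
Variables (R : rcfType) (n q : nat) (A : 'M[R]_(n, q)) (d : 'I_q -> R).
Hypothesis d_gt0 : forall i, 0 < d i.

Lemma ridge_gram_unitmx : A^T *m A + diag_mx (\row_i d i) \in unitmx.
Proof.
apply: unitmx_quad_inj => u; rewrite mulmxDl vdotDr vdot_gram -penaltyE => u0.
apply: (penalty_eq0 d_gt0); apply/eqP; rewrite eq_le penalty_ge0 => [|i]; last exact: ltW.
by rewrite andbT -u0 lerDr sqnorm_ge0.
Qed.

Lemma ridge_solution_min l :
  ridge_min A [set: 'I_q] d l (invmx (A^T *m A + diag_mx (\row_i d i)) *m A^T *m l).
Proof.
split=> [|u _]; first exact: supportedT.
set y := invmx _ *m _ *m l.
have normal : (A^T *m A + diag_mx (\row_i d i)) *m y = A^T *m l.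
  by rewrite /y -!mulmxA mulKVmx ?ridge_gram_unitmx.
rewrite -(subrK y u) addrC ridge_obj_normal // -addrA lerDl.
by rewrite addr_ge0 ?sqnorm_ge0 ?penalty_ge0 // => i; apply: ltW.
Qed.

End RidgeSolution.

Section Projection.
Variables (R : rcfType) (n p : nat) (X : 'M[R]_(n, p)).

Lemma unitmx_gram_full : \rank X = p -> X^T *m X \in unitmx.
Proof.
move=> Xfull; apply: unitmx_quad_inj => u; rewrite vdot_gram => /sqnorm_eq0 Xu0.
have XTfree : row_free X^T by rewrite /row_free mxrank_tr Xfull.
apply: trmx_inj; apply/eqP; rewrite trmx0 -(mulmx_free_eq0 _ XTfree).
by rewrite -trmx_mul Xu0 trmx0.
Qed.

Lemma residual_tr : (1%:M - projX X)^T = 1%:M - projX X.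
Proof.
by rewrite linearB /= trmx1 /projX !trmx_mul trmxK trmx_inv trmx_mul trmxK mulmxA.
Qed.

Lemma residual_idem : \rank X = p ->
  (1%:M - projX X) *m (1%:M - projX X) = 1%:M - projX X.
Proof.
move=> /unitmx_gram_full XXu.
have PP : projX X *m projX X = projX X.
  by rewrite /projX !mulmxA -(mulmxA _ X^T X) mulmxKV.
by rewrite mulmxBl !mulmxBr !mul1mx mulmx1 PP subrr subr0.
Qed.

End Projection.

Lemma Dtau_diag_mx (R : rcfType) r (qs : 'I_r -> nat) (tau : 'I_r -> R) :
  Dtau qs tau = diag_mx (\row_k tau (tagnat.sig1 k)).
Proof.
have /diag_mxP[dv Ddv] : is_diag_mx (Dtau qs tau).
  apply/is_diag_mxblockP; split=> [i j /negbTE->//|i].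
  by rewrite eqxx conform_mx_id scalar_mx_is_diag.
rewrite Ddv; congr diag_mx; apply/rowP => k.
transitivity (diag_mx dv k k); first by rewrite mxE eqxx mulr1n.
by rewrite -Ddv /Dtau /mxdiag !mxE eqxx conform_mx_id mxE eqxx mulr1n.
Qed.

Lemma Stau_gram (R : rcfType) n p r (qs : 'I_r -> nat) (X : 'M[R]_(n, p))
    (Z : 'M[R]_(n, \sum_(j < r) qs j)) (tau : 'I_r -> R) : \rank X = p ->
  Stau X Z tau = ((1%:M - projX X) *m Z)^T *m ((1%:M - projX X) *m Z)
                 + diag_mx (\row_k tau (tagnat.sig1 k)).
Proof.
move=> Xfull; rewrite /Stau Dtau_diag_mx trmx_mul residual_tr mulmxA.
by rewrite -(mulmxA _ _ (1%:M - _)) residual_idem.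
Qed.

Theorem lemma2 (R : rcfType) (n p r : nat) (qs : 'I_r -> nat)
  (X : 'M[R]_(n, p)) (Z : 'M[R]_(n, \sum_(j < r) qs j))
  (hX : \rank X = p) :
  exists phi : R, forall (tau : 'I_r -> R), (forall j, 0 < tau j) ->
    forall l : 'cV[R]_n,
      enorm (invmx (Stau X Z tau) *m Z^T *m (1%:M - projX X) *m l)
        <= phi * \sum_(i < n) `|l i 0|.
Proof.
set A := (1%:M - projX X) *m Z; set q := (\sum_(j < r) qs j)%N.
have [C _ Cbound] := ridge_coord_bound_card A #|[set: 'I_q]|.
exists (q%:R * C) => tau tau_gt0 l.
have d_gt0 (k : 'I_q) : 0 < tau (tagnat.sig1 (p_ := qs) k) by [].
have AT : A^T = Z^T *m (1%:M - projX X) by rewrite trmx_mul residual_tr.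
rewrite Stau_gram // -/A -(mulmxA _ Z^T) -AT.
apply: le_trans (enorm_le_norm1 _) _; rewrite -mulrA; apply: norm1_le => i.
exact: Cbound _ (leqnn _) _ _ _ d_gt0 (ridge_solution_min _ d_gt0 l) i.
Qed.
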